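(* Let $E$, $F$, $H_0$, $H_1$ be Hilbert spaces and let $L:E\to F$, $r_0:E\to H_0$, $r_1:E\to H_1$ be bounded linear maps such that $r_j\oplus L:E\to H_j\oplus F$ is an isomorphism for $j=0$ and for $j=1$. Let $Q:H_0\to H_1$ be the isomorphism $Q:=(r_1|_{\ker L})\circ(r_0|_{\ker L})^{-1}$ (note that $r_j$ restricts to an isomorphism $\ker(L)\to H_j$). Assume in addition that $r_0\oplus r_1:E\to H_0\oplus H_1$ is onto. Let $B_j\subset H_j$ ($j=0,1$) be closed linear subspaces and let $k\in\mathbb{Z}$. Then the following are equivalent: (i) The pair $(B_0,Q^{-1}B_1)$ is a Fredholm pair of index $k$ in $H_0$; (ii) The pair $(QB_0,B_1)$ is a Fredholm pair of index $k$ in $H_1$; (iii) The operator $(\pi_{B_0^\perp}\circ r_0)\oplus(\pi_{B_1^\perp}\circ r_1)\oplus L:E\to B_0^\perp\oplus B_1^\perp\oplus F$ is Fredholm of index $k$; (iv) The restriction $L:\ker(\pi_{B_0^\perp}\circ r_0)\cap\ker(\pi_{B_1^\perp}\circ r_1)\to F$ is a Fredholm operator of index $k$.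
   Context: For a closed subspace $V$ of a Hilbert space $H$, $\pi_V:H\to V$ denotes the orthogonal projection onto $V$. A pair $(B,B')$ of closed linear subspaces of a Hilbert space $H$ is called a Fredholm pair if $B\cap B'$ is finite dimensional and $B+B'$ is closed and of finite codimension in $H$; its index is $\mathrm{ind}(B,B')=\dim(B\cap B')-\dim(H/(B+B'))$. *)

From HB Require Import structures.
From mathcomp Require Import all_boot all_order all_algebra.
From mathcomp Require Import all_classical all_reals all_analysis.
Set Implicit Arguments. Unset Strict Implicit. Unset Printing Implicit Defensive.
Import Order.TTheory GRing.Theory Num.Theory.
Import numFieldNormedType.Exports.
Local Open Scope classical_set_scope.
Local Open Scope ring_scope.

Section Hilbert.
Variable R : realType.

(* A Hilbert space is a complete normed space whose norm comes from an
   inner product.  [inner_product V] packages that inner product. *)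
Record inner_product (V : normedModType R) := InnerProduct {
  ip : V -> V -> R;
  ip_sym : forall x y, ip x y = ip y x;
  ip_linear : forall a x y z, ip (a *: x + y) z = a * ip x z + ip y z;
  ip_norm : forall x, ip x x = `|x| ^+ 2 }.

Definition bounded_linear (U V : normedModType R) (f : U -> V) :=
  (forall (a : R) x y, f (a *: x + y) = a *: f x + f y) /\
  exists C : R, forall x, `|f x| <= C * `|x|.

Definition isomorphism (U V : normedModType R) (f : U -> V) :=
  bounded_linear f /\
  exists g : V -> U, [/\ bounded_linear g, cancel f g & cancel g f].

Definition subspace (V : normedModType R) (S : set V) :=
  S 0 /\ forall (a : R) x y, S x -> S y -> S (a *: x + y).

Definition closed_subspace (V : normedModType R) (S : set V) :=
  subspace S /\ closed S.

Definition dim_eq (V : normedModType R) (S : set V) (n : nat) :=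
  exists v : 'I_n -> V,
  [/\ forall i, S (v i),
      forall c : 'I_n -> R, \sum_i c i *: v i = 0 -> forall i, c i = 0
    & forall x, S x -> exists c : 'I_n -> R, x = \sum_i c i *: v i].

(* dim (W / S) = n, for a subspace S of W: there are n vectors of W whose
   classes form a basis of the quotient W / S. *)
Definition codim_eq (V : normedModType R) (W S : set V) (n : nat) :=
  exists w : 'I_n -> V,
  [/\ forall i, W (w i),
      forall c : 'I_n -> R, S (\sum_i c i *: w i) -> forall i, c i = 0
    & forall x, W x -> exists c : 'I_n -> R, S (x - \sum_i c i *: w i)].

Definition sum_set (V : normedModType R) (A B : set V) : set V :=
  [set x | exists u v, [/\ A u, B v & x = u + v]].

Definition fredholm_pair (V : normedModType R) (B B' : set V) (k : int) :=
  exists a b : nat,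
  [/\ dim_eq (B `&` B') a, closed (sum_set B B'),
      codim_eq setT (sum_set B B') b & k = (a%:Z - b%:Z)%R].

Definition fredholm_op (U V : normedModType R) (D : set U) (W : set V)
    (T : U -> V) (k : int) :=
  (forall x, D x -> W (T x)) /\
  exists a b : nat,
  [/\ dim_eq (D `&` [set x | T x = 0]) a, closed (T @` D),
      codim_eq W (T @` D) b & k = (a%:Z - b%:Z)%R].

Definition orth (V : normedModType R) (iV : inner_product V) (B : set V) : set V :=
  [set x | forall b, B b -> ip iV x b = 0].

Definition orth_proj (V : normedModType R) (iV : inner_product V) (B : set V)
    (x : V) : V :=
  xget 0 [set y | B y /\ forall b, B b -> ip iV (x - y) b = 0].

Definition Qmap (E F H0 H1 : normedModType R) (L : E -> F) (r0 : E -> H0)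
    (r1 : E -> H1) (h : H0) : H1 :=
  r1 (xget 0 [set e | L e = 0 /\ r0 e = h]).

End Hilbert.

(* Everything is reduced to condition (ii).  As (r0, L) is invertible,
   r1 = Q r0 + M L with M f := r1 ((r0, L)^-1 (0, f)), and since r0 (+) r1 is
   onto, so is M : F -> H1.  By the open mapping theorem, which for Hilbert
   spaces follows from the adjoint of M and the Banach-Steinhaus theorem, M has
   a bounded (not necessarily linear) right inverse.  In each of (i), (iii) and
   (iv) the kernel is linearly isomorphic to the intersection of Q B0 and B1,
   and the range is the preimage of Q B0 + B1 under a bounded linear map having
   a bounded right inverse on a closed subspace: Q for (i), M for (iv), and
   (h0, h1, f) |-> M f + Q h0 - h1 on B0^perp x B1^perp x F for (iii).  Such
   preimages have the same closedness and the same codimension. *)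

From Pilot Require Import Defs.
From HB Require Import structures.
From mathcomp Require Import all_boot all_order all_algebra.
From mathcomp Require Import all_classical all_reals all_analysis.
From mathcomp Require Import ring lra.
Import Order.TTheory GRing.Theory Num.Theory.
Import numFieldNormedType.Exports.
Local Open Scope classical_set_scope.
Local Open Scope ring_scope.

Set Implicit Arguments.
Unset Strict Implicit.
Unset Printing Implicit Defensive.

Section LinearMaps.
Variable R : realType.

Section Linear.
Variables (U V : normedModType R) (f : U -> V).
Hypothesis lf : linear f.

Let lin : {linear U -> V} := HB.pack f (GRing.isLinear.Build _ _ _ _ _ lf).

Lemma lin0 : f 0 = 0. Proof. exact: (linear0 lin). Qed.
Lemma linD x y : f (x + y) = f x + f y. Proof. exact: (linearD lin). Qed.
Lemma linN x : f (- x) = - f x. Proof. exact: (linearN lin). Qed.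
Lemma linB x y : f (x - y) = f x - f y. Proof. exact: (linearB lin). Qed.
Lemma linZ a x : f (a *: x) = a *: f x. Proof. exact: (linearZZ lin). Qed.

Lemma lin_sum n (c : 'I_n -> R) (v : 'I_n -> U) :
  f (\sum_i c i *: v i) = \sum_i c i *: f (v i).
Proof. by rewrite (big_morph f linD lin0); apply: eq_bigr => i _; rewrite linZ. Qed.

End Linear.

Lemma bounded_linear_bound (U V : normedModType R) (f : U -> V) :
  bounded_linear f -> exists2 C, 0 <= C & forall x, `|f x| <= C * `|x|.
Proof.
move=> [_ [C fC]]; exists `|C| => // x.
by rewrite (le_trans (fC x)) // ler_wpM2r // ler_norm.
Qed.

Lemma continuous_bounded_linear (U V : normedModType R) (f : U -> V) :
  bounded_linear f -> continuous f.
Proof.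
move=> [lf [C fC]].
pose lin : {linear U -> V} := HB.pack f (GRing.isLinear.Build _ _ _ _ _ lf).
apply: (@bounded_linear_continuous _ _ _ lin); apply/linear_boundedP; near=> r => x.
by rewrite (le_trans (fC x)) // ler_wpM2r //; near: r; apply: nbhs_pinfty_ge.
Unshelve. all: by end_near. Qed.

Lemma bounded_linear_comp (U V W : normedModType R) (f : U -> V) (g : V -> W) :
  bounded_linear f -> bounded_linear g -> bounded_linear (g \o f).
Proof.
move=> bf bg; have [[lf _] [lg _]] := (bf, bg).
have [Cf _ fC] := bounded_linear_bound bf.
have [Cg Cg0 gC] := bounded_linear_bound bg.
split=> [a x y|]; first by rewrite /= lf lg.
exists (Cg * Cf) => x /=; rewrite -mulrA.
by rewrite (le_trans (gC _)) // ler_wpM2l.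
Qed.

Lemma bounded_linearD (U V : normedModType R) (f g : U -> V) :
  bounded_linear f -> bounded_linear g -> bounded_linear (fun x => f x + g x).
Proof.
move=> [lf [Cf fC]] [lg [Cg gC]]; split=> [a x y|].
  by rewrite lf lg scalerDr addrACA.
by exists (Cf + Cg) => x; rewrite mulrDl (le_trans (ler_normD _ _)) ?lerD.
Qed.

Lemma bounded_linearN (U V : normedModType R) (f : U -> V) :
  bounded_linear f -> bounded_linear (fun x => - f x).
Proof.
move=> [lf [C fC]]; split=> [a x y|]; first by rewrite lf opprD scalerN.
by exists C => x; rewrite normrN.
Qed.

Lemma bounded_linearB (U V : normedModType R) (f g : U -> V) :
  bounded_linear f -> bounded_linear g -> bounded_linear (fun x => f x - g x).
Proof. by move=> bf /bounded_linearN; exact: bounded_linearD. Qed.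

Lemma normr_fst (U V : normedModType R) (x : U * V) : `|x.1| <= `|x|.
Proof. by rewrite [`|x|]prod_normE le_max lexx. Qed.

Lemma normr_snd (U V : normedModType R) (x : U * V) : `|x.2| <= `|x|.
Proof. by rewrite [`|x|]prod_normE le_max lexx orbT. Qed.

Lemma normr_inl (U V : normedModType R) (x : U) : `|(x, 0 : V)| = `|x|.
Proof. by rewrite prod_normE /= normr0; apply/max_idPl. Qed.

Lemma normr_inr (U V : normedModType R) (y : V) : `|(0 : U, y)| = `|y|.
Proof. by rewrite prod_normE /= normr0; apply/max_idPr. Qed.

Lemma bounded_linear_fst (U V : normedModType R) : bounded_linear (@fst U V).
Proof. by split=> //; exists 1 => x; rewrite mul1r normr_fst. Qed.

Lemma bounded_linear_snd (U V : normedModType R) : bounded_linear (@snd U V).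
Proof. by split=> //; exists 1 => x; rewrite mul1r normr_snd. Qed.

Lemma bounded_linear_inl (U V : normedModType R) :
  bounded_linear (fun x : U => (x, 0 : V)).
Proof.
split=> [a x y|]; first by congr (_, _); rewrite /= scaler0 addr0.
by exists 1 => x; rewrite mul1r normr_inl.
Qed.

Lemma bounded_linear_inr (U V : normedModType R) :
  bounded_linear (fun y : V => (0 : U, y)).
Proof.
split=> [a x y|]; first by congr (_, _); rewrite /= scaler0 addr0.
by exists 1 => x; rewrite mul1r normr_inr.
Qed.

End LinearMaps.

(* [Defs.subspace] is qualified because [subspace] alone denotes the subspace
   topology of mathcomp-analysis. *)
Section Subspaces.
Variables (R : realType) (U : normedModType R) (S : set U).
Hypothesis sS : Defs.subspace S.

Lemma subspace0 : S 0. Proof. by have [] := sS. Qed.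

Lemma subspaceD x y : S x -> S y -> S (x + y).
Proof. by have [_ sD] := sS => Sx Sy; have := sD 1 x y Sx Sy; rewrite scale1r. Qed.

Lemma subspaceZ a x : S x -> S (a *: x).
Proof. by have [S0 sD] := sS => Sx; have := sD a x 0 Sx S0; rewrite addr0. Qed.

Lemma subspaceN x : S x -> S (- x).
Proof. by rewrite -scaleN1r; exact: subspaceZ. Qed.

Lemma subspaceB x y : S x -> S y -> S (x - y).
Proof. by move=> Sx /subspaceN; exact: subspaceD. Qed.

Lemma subspace_sum n (c : 'I_n -> R) (v : 'I_n -> U) :
  (forall i, S (v i)) -> S (\sum_i c i *: v i).
Proof.
move=> Sv; elim/big_ind: _ => //; [exact: subspace0 | exact: subspaceD |].
by move=> i _; exact: subspaceZ.
Qed.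

End Subspaces.

Lemma subspaceT (R : realType) (U : normedModType R) : Defs.subspace (@setT U).
Proof. by []. Qed.

Lemma closed_normP (R : realType) (U : normedModType R) (A : set U) :
  closed A <-> forall x, (forall e, 0 < e -> exists2 a, A a & `|x - a| < e) -> A x.
Proof.
split=> [cA x xA|Aclosure x xA].
  apply: cA => B /nbhs_ballP [e e0 eB]; have [a Aa xa] := xA e e0.
  by exists a; split => //; apply: eB; rewrite -ball_normE.
apply: Aclosure => e e0; have [a [Aa xa]] := xA _ (nbhsx_ballx x _ e0).
by exists a => //; move: xa; rewrite -ball_normE.
Qed.

Lemma bounded_linear_closed_preimage (R : realType) (U V : normedModType R) (f : U -> V)
    (A : set V) :
  bounded_linear f -> closed A -> closed (f @^-1` A).
Proof.
move=> bf; apply: preimage_closed => x _; exact: continuous_bounded_linear.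
Qed.

Lemma closed_kernel (R : realType) (U V : normedModType R) (f : U -> V) :
  bounded_linear f -> closed [set x | f x = 0].
Proof.
move=> bf; apply: (bounded_linear_closed_preimage (A := [set 0]) bf).
exact/accessible_closed_set1/hausdorff_accessible/norm_hausdorff.
Qed.

(** * Transport of Fredholm data *)

Definition has_bounded_section (R : realType) (U V : normedModType R)
    (W : set U) (A : U -> V) :=
  exists C, forall y, exists x, [/\ W x, A x = y & `|x| <= C * `|y|].

Section Transfer.
Variable R : realType.

Lemma dim_eq_transport (U V : normedModType R) (X : set U) (Y : set V)
    (f : U -> V) (g : V -> U) n :
  linear f -> linear g -> (forall x, X x -> Y (f x)) -> (forall y, Y y -> X (g y)) ->
  (forall x, X x -> g (f x) = x) -> (forall y, Y y -> f (g y) = y) ->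
  dim_eq X n -> dim_eq Y n.
Proof.
move=> lf lg XY YX fK gK [v [Xv v_free v_span]].
exists (fun i => f (v i)); split=> [i|c fc0|y Yy]; first exact/XY/Xv.
  apply: v_free; transitivity (\sum_i c i *: g (f (v i))).
    by apply: eq_bigr => i _; rewrite fK.
  by rewrite -lin_sum // fc0 lin0.
by have [c gy] := v_span _ (YX _ Yy); exists c; rewrite -lin_sum // -gy gK.
Qed.

Lemma dim_eq_bij (U V : normedModType R) (X : set U) (Y : set V)
    (f : U -> V) (g : V -> U) n :
  linear f -> linear g -> (forall x, X x -> Y (f x)) -> (forall y, Y y -> X (g y)) ->
  (forall x, X x -> g (f x) = x) -> (forall y, Y y -> f (g y) = y) ->
  dim_eq X n <-> dim_eq Y n.
Proof.
move=> lf lg XY YX fK gK.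
split; first exact: (dim_eq_transport lf lg XY YX fK gK).
exact: (dim_eq_transport lg lf YX XY gK fK).
Qed.

Lemma codim_eq_preimage (U V : normedModType R) (W : set U) (A : U -> V) (S : set V) n :
  linear A -> Defs.subspace W -> (forall y, exists x, W x /\ A x = y) ->
  codim_eq W (W `&` A @^-1` S) n <-> codim_eq setT S n.
Proof.
move=> lA sW /choice [s sP].
have As (c : 'I_n -> R) (w : 'I_n -> V) : A (\sum_i c i *: s (w i)) = \sum_i c i *: w i :> V.
  by rewrite lin_sum //; apply: eq_bigr => i _; rewrite (sP _).2.
split=> [[w [Ww w_free w_span]]|[w [_ w_free w_span]]].
  exists (fun i => A (w i)); split=> // [c|y _].
    by rewrite -lin_sum // => Sc; apply: w_free; split => //; exact: subspace_sum.
  have [c [_]] := w_span _ (sP y).1; rewrite /preimage /= linB // (sP y).2.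
  by rewrite lin_sum //; exists c.
exists (fun i => s (w i)); split=> [i|c [_]|x Wx]; first by case: (sP (w i)).
  by rewrite /preimage /= As; exact: w_free.
have [c Sc] := w_span (A x) I; exists c; split; last by rewrite /preimage /= linB // As.
by apply: subspaceB => //; apply: subspace_sum => // i; case: (sP (w i)).
Qed.

Lemma closed_preimage_onto (U V : normedModType R) (W : set U) (A : U -> V) (S : set V) :
  Defs.subspace W -> closed W -> bounded_linear A -> has_bounded_section W A ->
  closed (W `&` A @^-1` S) <-> closed S.
Proof.
move=> sW cW bA [C sec]; have [lA _] := bA; split=> [cWS|cS]; last first.
  exact: closedI cW (bounded_linear_closed_preimage bA cS).
apply/closed_normP => y yS; have [x [Wx Axy _]] := sec y.
suff [_] : (W `&` A @^-1` S) x by rewrite /preimage /= Axy.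
apply/(closed_normP _).1 => // e e0.
have C1 : 0 < `|C| + 1 by rewrite ltr_wpDl.
have [y' Sy' yy'] := yS _ (divr_gt0 e0 C1).
have [d [Wd Ad dC]] := sec (y - y').
exists (x - d); first by split; [exact: subspaceB | rewrite /preimage /= linB // Axy Ad subKr].
rewrite opprB addrC subrK (le_lt_trans dC) //.
rewrite ltr_pdivlMr // in yy'; apply: le_lt_trans yy'.
by rewrite mulrC ler_wpM2l ?normr_ge0 // (le_trans (ler_norm C)) // lerDl.
Qed.

End Transfer.

Lemma fredholm_index_congr (R : realType) (U V U' V' : normedModType R)
    (K : set U) (W Y : set V) (K' : set U') (W' Y' : set V') (k : int) :
  (forall a, dim_eq K a <-> dim_eq K' a) -> (closed Y <-> closed Y') ->
  (forall b, codim_eq W Y b <-> codim_eq W' Y' b) ->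
  (exists a b : nat, [/\ dim_eq K a, closed Y, codim_eq W Y b & k = a%:Z - b%:Z]) <->
  (exists a b : nat, [/\ dim_eq K' a, closed Y', codim_eq W' Y' b & k = a%:Z - b%:Z]).
Proof.
move=> dimE cE codimE.
by split=> -[a [b [/dimE Ka /cE cY /codimE Yb ->]]]; exists a, b.
Qed.

Lemma fredholm_pair_iso (R : realType) (U V : normedModType R) (A : U -> V) (Ai : V -> U)
    (B : set U) (B' : set V) (k : int) :
  bounded_linear A -> bounded_linear Ai -> cancel A Ai -> cancel Ai A ->
  fredholm_pair B (A @^-1` B') k <-> fredholm_pair (A @` B) B' k.
Proof.
move=> bA bAi AK AiK; have [[lA _] [lAi _]] := (bA, bAi).
have sumE : sum_set B (A @^-1` B') = setT `&` A @^-1` sum_set (A @` B) B'.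
  apply/seteqP; split=> x.
    move=> [u [v [Bu Bv ->]]]; split=> //; exists (A u), (A v).
    by split; [exists u | | exact: linD].
  move=> [_ [_ [v [[b Bb <-] Bv Ax]]]]; exists b, (Ai v).
  by split; [| rewrite /preimage /= AiK | rewrite -(AK x) Ax linD // !AK].
have [C _ AiC] := bounded_linear_bound bAi.
have A_section : has_bounded_section setT A by exists C => y; exists (Ai y); split.
have A_onto y : exists x, setT x /\ A x = y by exists (Ai y).
apply: fredholm_index_congr; rewrite ?sumE.
- move=> a; apply: (dim_eq_bij _ lA lAi).
  + by move=> x [Bx B'Ax]; split=> //; exists x.
  + by move=> _ [[b Bb <-] B'Ab]; rewrite AK.
  + by move=> x _; rewrite AK.
  + by move=> y _; rewrite AiK.
- exact: closed_preimage_onto (subspaceT _) closedT bA A_section.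
- by move=> b; exact: codim_eq_preimage lA (subspaceT _) A_onto.
Qed.

(** * Inner product spaces and orthogonal projections *)

Lemma invSn_le (R : realType) (n m : nat) : (n <= m)%N -> m.+1%:R^-1 <= n.+1%:R^-1 :> R.
Proof. by move=> nm; rewrite lef_pV2 ?posrE ?ltr0Sn // ler_nat ltnS. Qed.

Lemma quadratic_ge0_eq0 (R : realType) (p q : R) :
  0 <= q -> (forall t, 0 <= t ^+ 2 * q - 2 * t * p) -> p = 0.
Proof.
move=> q0 ge0; have q1 : q + 1 != 0 by rewrite gt_eqF // ltr_wpDl.
set t := p / (q + 1); have pt : p = t * (q + 1) by rewrite divfK.
have := ge0 t; rewrite pt => tge0.
have : t ^+ 2 == 0 by rewrite eq_le sqr_ge0 andbT; nra.
by rewrite sqrf_eq0 => /eqP ->; rewrite mul0r.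
Qed.

Section InnerProduct.
Variables (R : realType) (V : normedModType R) (iV : inner_product V).
Local Notation ipV := (ip iV).

Lemma ip_linear_l z : linear (fun x => ipV x z : R^o).
Proof. by move=> a x y; exact: ip_linear. Qed.

Lemma ip0l z : ipV 0 z = 0. Proof. exact: (lin0 (ip_linear_l z)). Qed.
Lemma ipDl x y z : ipV (x + y) z = ipV x z + ipV y z.
Proof. exact: (linD (ip_linear_l z)). Qed.
Lemma ipZl a x z : ipV (a *: x) z = a * ipV x z.
Proof. exact: (linZ (ip_linear_l z)). Qed.
Lemma ipNl x z : ipV (- x) z = - ipV x z.
Proof. exact: (linN (ip_linear_l z)). Qed.
Lemma ipBl x y z : ipV (x - y) z = ipV x z - ipV y z.
Proof. exact: (linB (ip_linear_l z)). Qed.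

Lemma ip0r z : ipV z 0 = 0. Proof. by rewrite ip_sym ip0l. Qed.
Lemma ipDr x y z : ipV z (x + y) = ipV z x + ipV z y.
Proof. by rewrite ip_sym ipDl !(ip_sym _ z). Qed.
Lemma ipZr a x z : ipV z (a *: x) = a * ipV z x.
Proof. by rewrite ip_sym ipZl (ip_sym _ z). Qed.
Lemma ipNr x z : ipV z (- x) = - ipV z x.
Proof. by rewrite ip_sym ipNl (ip_sym _ z). Qed.
Lemma ipBr x y z : ipV z (x - y) = ipV z x - ipV z y.
Proof. by rewrite ip_sym ipBl !(ip_sym _ z). Qed.

Lemma ip_eq0 x : ipV x x = 0 -> x = 0.
Proof. by rewrite ip_norm => /eqP; rewrite sqrf_eq0 normr_eq0 => /eqP. Qed.

Lemma ip_ext x y : (forall z, ipV x z = ipV y z) -> x = y.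
Proof.
move=> xy; apply/eqP; rewrite -subr_eq0; apply/eqP/ip_eq0.
by rewrite ipBl xy subrr.
Qed.

Lemma cauchy_schwarz x y : `|ipV x y| <= `|x| * `|y|.
Proof.
have [->|y0] := eqVneq y 0; first by rewrite ip0r !normr0 mulr0.
set p := ipV x y; set q := ipV y y.
have q0 : 0 < q by rewrite /q ip_norm exprn_gt0 // normr_gt0.
have : 0 <= ipV (q *: x - p *: y) (q *: x - p *: y) by rewrite ip_norm sqr_ge0.
rewrite ipBl !ipBr !ipZl !ipZr (ip_sym _ y x) -/p -/q => qxpy.
have p2 : p ^+ 2 <= (`|x| * `|y|) ^+ 2 by rewrite exprMn -!(ip_norm iV) -/q; nra.
by rewrite -ler_sqr ?nnegrE ?mulr_ge0 // real_normK ?num_real.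
Qed.

Lemma ip_bounded_linear_l z : bounded_linear (fun x => ipV x z : R^o).
Proof.
split; first exact: ip_linear_l.
by exists `|z| => x; rewrite mulrC; exact: cauchy_schwarz.
Qed.

Lemma parallelogram (x y : V) :
  `|x + y| ^+ 2 + `|x - y| ^+ 2 = 2 * `|x| ^+ 2 + 2 * `|y| ^+ 2.
Proof. by rewrite -!(ip_norm iV) ipDl ipBl !ipDr !ipNr (ip_sym _ y x); ring. Qed.

Lemma parallelogram_le (u v : V) (d s t : R) :
  `|u| ^+ 2 <= d + s -> `|v| ^+ 2 <= d + t -> d <= `|2^-1 *: (u + v)| ^+ 2 ->
  `|u - v| ^+ 2 <= 2 * s + 2 * t.
Proof.
rewrite normrZ exprMn ger0_norm ?invr_ge0 // exprVn => us vt dm.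
have := parallelogram u v; rewrite -(mulfVK (_ : 2 ^+ 2 != 0 :> R) (`|u + v| ^+ 2)) //.
lra.
Qed.

Lemma orth_subspace (B : set V) : Defs.subspace (orth iV B).
Proof.
split=> [b _|a x y xB yB b Bb]; first exact: ip0l.
by rewrite ip_linear xB // yB // mulr0 addr0.
Qed.

Lemma closed_orth (B : set V) : closed (orth iV B).
Proof.
have -> : orth iV B = \bigcap_(b in B) [set x | ipV x b = 0].
  by apply/seteqP; split=> x xB b /xB.
by apply: closed_bigI => b _; exact: closed_kernel (ip_bounded_linear_l b).
Qed.

Lemma minimizer_orth (B : set V) (x y : V) : Defs.subspace B -> B y ->
  (forall b, B b -> `|x - y| ^+ 2 <= `|x - b| ^+ 2) -> orth iV B (x - y).
Proof.
move=> sB By ymin c Bc; apply: (@quadratic_ge0_eq0 _ _ (ipV c c)).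
  by rewrite ip_norm sqr_ge0.
move=> t; have := ymin _ (subspaceD sB By (subspaceZ sB t Bc)).
rewrite opprD addrA; move: (x - y) => u.
by rewrite -!(ip_norm iV) ipBl !ipBr !ipZl !ipZr (ip_sym _ c u); nra.
Qed.

Lemma minimizing_seq_cauchy (B : set V) (x : V) (d : R) (u : nat -> V) :
  Defs.subspace B -> (forall b, B b -> d <= `|x - b| ^+ 2) ->
  (forall n, B (u n) /\ `|x - u n| ^+ 2 < d + n.+1%:R^-1) -> cauchy (u @ \oo).
Proof.
move=> sB d_le uP; apply: cauchy_exP => e e0.
have e20 : 0 < e ^+ 2 / 4 by rewrite divr_gt0 ?exprn_gt0.
have [N] := ltr_add_invr e20; rewrite add0r => Ne.
exists (u N), N => // m /= Nm; rewrite -ball_normE /= -ltr_sqr ?nnegrE ?(ltW e0) //.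
have mid : B (2^-1 *: (u N + u m)).
  by apply: subspaceZ => //; apply: subspaceD => //; [case: (uP N) | case: (uP m)].
have mid_eq : x - 2^-1 *: (u N + u m) = 2^-1 *: ((x - u N) + (x - u m)).
  rewrite addrACA -opprD scalerBr; congr (_ - _).
  by rewrite -mulr2n -scalerMnr scalerMnl -mulr_natr mulVf ?pnatr_eq0 // scale1r.
have := parallelogram_le (ltW (uP N).2) (ltW (uP m).2).
rewrite -mid_eq => /(_ (d_le _ mid)); rewrite opprB addrC subrKA distrC.
have := invSn_le R Nm; move: Ne; move: (N.+1%:R^-1) (m.+1%:R^-1) => a b; lra.
Qed.

End InnerProduct.

Lemma continuous_dist2 (R : realType) (V : normedModType R) (x : V) :
  continuous (fun z => `|x - z| ^+ 2).
Proof.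
move=> z; apply: (@continuous_comp _ _ _ (fun z => `|x - z|) (fun r => r ^+ 2)).
  apply: continuous_comp; last exact: norm_continuous.
  by apply: continuousB; [exact: cst_continuous | exact: cvg_id].
exact: exprn_continuous.
Qed.

Section Projection.
Variables (R : realType) (V : completeNormedModType R) (iV : inner_product V).

Lemma dist_minimizer (B : set V) : closed_subspace B -> forall x,
  exists2 y, B y & forall b, B b -> `|x - y| ^+ 2 <= `|x - b| ^+ 2.
Proof.
move=> [sB cB] x; pose D := [set `|x - b| ^+ 2 | b in B]; pose d := inf D.
have D0 : D !=set0 by exists (`|x - 0| ^+ 2), 0 => //; exact: subspace0.
have Dlb : has_lbound D by exists 0 => _ [b _ <-]; exact: sqr_ge0.
have d_le b : B b -> d <= `|x - b| ^+ 2 by move=> Bb; apply: ge_inf => //; exists b.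
have /choice [u uP] (n : nat) : exists u, B u /\ `|x - u| ^+ 2 < d + n.+1%:R^-1.
  have n0 : 0 < n.+1%:R^-1 :> R by rewrite invr_gt0.
  by have [_ [u Bu <-] ?] := inf_adherent n0 (conj D0 Dlb); exists u.
have u_cauchy := minimizing_seq_cauchy iV sB d_le uP.
have uy : u @ \oo --> limn u by apply: cauchy_cvg.
exists (limn u) => [|b Bb].
  by apply: (closed_cvg _ cB _ _ uy); apply: nearW => n; case: (uP n).
apply: le_trans (d_le _ Bb); apply/ler_addgt0Pr => e e0.
have [N] := ltr_add_invr e0; rewrite add0r => Ne.
have closed_e : closed [set z | `|x - z| ^+ 2 <= d + e].
  by apply: (preimage_closed _ (@closed_le R (d + e))) => z _; exact: continuous_dist2.
apply: (closed_cvg _ closed_e _ _ uy); exists N => // n /= Nn.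
by rewrite (le_trans (ltW (uP n).2)) // lerD2l (le_trans (invSn_le R Nn)) // ltW.
Qed.

Lemma orth_decomposition (B : set V) : closed_subspace B -> forall x,
  exists2 b, B b & orth iV B (x - b).
Proof.
move=> cB x; have [y By ymin] := dist_minimizer cB x.
by exists y => //; apply: minimizer_orth => //; case: cB.
Qed.

Section OrthogonalProjection.
Variables (B : set V) (cB : closed_subspace B).
Local Notation P := (orth_proj iV (orth iV B)).

Lemma orth_projE x y : orth iV B y -> B (x - y) -> P x = y.
Proof.
move=> By xyB; have sBo := orth_subspace iV B.
have [Bp pP] :
    [set p | orth iV B p /\ forall c, orth iV B c -> ip iV (x - p) c = 0] (P x).
  by apply: xgetPex; exists y; split=> // c Bc; rewrite ip_sym; exact: Bc.
have dB : orth iV B (P x - y) := subspaceB sBo Bp By.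
have dE : P x - y = (x - y) - (x - P x) by rewrite opprB [RHS]addrC subrKA.
have : ip iV (P x - y) (P x - y) = 0.
  by rewrite {1}dE ipBl pP // subr0 ip_sym; exact: dB.
by move/ip_eq0/eqP; rewrite subr_eq0 => /eqP.
Qed.

Lemma orth_proj_orth x : orth iV B (P x).
Proof. by have [b Bb xb] := orth_decomposition cB x; rewrite (orth_projE xb) ?subKr. Qed.

Lemma orth_proj_sub x : B (x - P x).
Proof. by have [b Bb xb] := orth_decomposition cB x; rewrite (orth_projE xb) ?subKr. Qed.

Lemma orth_proj_eq0 x : P x = 0 <-> B x.
Proof.
split=> [Px0|Bx]; first by have := orth_proj_sub x; rewrite Px0 subr0.
by apply: orth_projE; [exact: subspace0 (orth_subspace iV B) | rewrite subr0].
Qed.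

End OrthogonalProjection.

Lemma riesz_representation (phi : V -> R^o) :
  bounded_linear phi -> exists z, forall x, phi x = ip iV z x.
Proof.
move=> bphi; have [lphi _] := bphi; pose K := [set x | phi x = 0].
have cK : closed_subspace K.
  split; last exact: closed_kernel.
  split=> [|a x y Kx Ky]; first exact: lin0.
  by rewrite /K /= lphi Kx Ky scaler0 addr0.
have [[u phiu]|phi0] := pselect (exists u, phi u != 0); last first.
  by exists 0 => x; rewrite ip0l; apply/eqP; apply: contra_notT phi0 => phix; exists x.
have [k Kk uk] := orth_decomposition cK u; set w := u - k in uk.
have phiw : phi w = phi u by rewrite linB // Kk subr0.
have ww : ip iV w w != 0 by apply: contraNneq phiu => /ip_eq0 w0; rewrite -phiw w0 lin0.
have phiw0 : phi w != 0 by rewrite phiw.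
exists ((phi w / ip iV w w) *: w) => x; rewrite ipZl.
have /uk : K (x - (phi x / phi w) *: w).
  by rewrite /K /= linB // linZ // -[_ *: phi w]/(_ * phi w) divfK ?subrr.
rewrite ipBr ipZr => /eqP; rewrite subr_eq0 => /eqP ->.
by field; rewrite ww phiw0.
Qed.

End Projection.

Lemma closed_range_bounded_below (R : realType) (U : completeNormedModType R)
    (V : normedModType R) (T : U -> V) (K : R) :
  bounded_linear T -> 0 <= K -> (forall x, `|x| <= K * `|T x|) -> closed (range T).
Proof.
move=> bT K0 TK; have [lT _] := bT; apply/closed_normP => y yR.
have /choice [x xP] (n : nat) : exists x, `|y - T x| < n.+1%:R^-1.
  have n0 : 0 < n.+1%:R^-1 :> R by rewrite invr_gt0.
  by have [_ [x _ <-] ?] := yR _ n0; exists x.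
have x_cauchy : cauchy (x @ \oo).
  apply: cauchy_exP => e e0; have K1 : 0 < 2 * (K + 1) by rewrite mulr_gt0 // ltr_wpDl.
  have [N] := ltr_add_invr (divr_gt0 e0 K1); rewrite add0r ltr_pdivlMr // => Ne.
  exists (x N), N => // m /= Nm; rewrite -ball_normE /=.
  have Txx : `|T (x N - x m)| < 2 * N.+1%:R^-1.
    have -> : T (x N - x m) = (y - T (x m)) - (y - T (x N)).
      by rewrite (linB lT) opprB [RHS]addrC subrKA.
    rewrite (le_lt_trans (ler_normB _ _)) //; have := xP N; have := xP m.
    by have := invSn_le R Nm; move: (N.+1%:R^-1) (m.+1%:R^-1) => a b; lra.
  apply: le_lt_trans (TK _) _; apply: le_lt_trans Ne.
  have := normr_ge0 (T (x N - x m)); move: Txx; move: (N.+1%:R^-1) => a; nra.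
have xl : x @ \oo --> limn x by apply: cauchy_cvg.
have Txl : (T \o x) @ \oo --> T (limn x).
  apply: continuous_cvg xl; exact: continuous_bounded_linear.
have Txy : (T \o x) @ \oo --> y.
  apply/cvgrPdist_lt => e e0; have [N] := ltr_add_invr e0; rewrite add0r => Ne.
  by exists N => // n /= Nn; rewrite (lt_le_trans (xP n)) // (le_trans (invSn_le R Nn)) // ltW.
by exists (limn x) => //; exact: cvg_unique Txl Txy.
Qed.

(** * Open mapping theorem for Hilbert spaces *)

Lemma sqr_le_mul (R : realType) (a b : R) : 0 <= a -> 0 <= b -> a ^+ 2 <= b * a -> a <= b.
Proof. by move=> a0 b0 ab; nra. Qed.

Section Adjoint.
Variables (R : realType) (U V : completeNormedModType R).
Variables (iU : inner_product U) (iV : inner_product V).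

Lemma adjoint_exists (T : U -> V) : bounded_linear T ->
  exists2 Ts : V -> U, bounded_linear Ts & forall x y, ip iV (T x) y = ip iU (Ts y) x.
Proof.
move=> bT; have [lT _] := bT; have [C C0 TC] := bounded_linear_bound bT.
have /choice [Ts TsP] y : exists z, forall x, ip iV (T x) y = ip iU z x.
  apply: riesz_representation; split=> [a x x'|]; first by rewrite lT ipDl ipZl.
  exists (C * `|y|) => x; rewrite (le_trans (cauchy_schwarz _ _ _)) //.
  by rewrite mulrAC ler_wpM2r.
exists Ts => //; split=> [a y y'|].
  by apply: (ip_ext (iV := iU)) => x; rewrite ipDl ipZl -!TsP ipDr ipZr.
exists C => y; apply: sqr_le_mul ; rewrite ?mulr_ge0 //.
rewrite -(ip_norm iU) -TsP (le_trans (ler_norm _)) // (le_trans (cauchy_schwarz _ _ _)) //.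
by rewrite mulrAC ler_wpM2r.
Qed.

Lemma adjoint_bounded_below (T : U -> V) (Ts : V -> U) :
  linear Ts -> (forall x y, ip iV (T x) y = ip iU (Ts y) x) -> (forall y, exists x, T x = y) ->
  exists2 K, 0 <= K & forall y, `|y| <= K * `|Ts y|.
Proof.
move=> lTs TsP T_onto.
have Ts0 y : Ts y = 0 -> y = 0.
  move=> Tsy0; have [x xy] := T_onto y; apply: (ip_eq0 (iV := iV)).
  by rewrite -{1}xy TsP Tsy0 ip0l.
have Tsy_gt0 y : `|y| = 1 -> 0 < `|Ts y|.
  move=> y1; rewrite normr_gt0; apply: contraTneq isT => /Ts0 y0.
  by move: y1; rewrite y0 normr0 => /eqP; rewrite eq_sym oner_eq0.
(* Pointwise bounded since <y, T x> = <Ts y, x>; the uniform bound at h := y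
   then reads 1 <= K |Ts y| for unit vectors y. *)
pose Fam := [set (fun h => ip iV y h / `|Ts y| : R^o) | y in [set y : V | `|y| = 1]].
have Fam_bounded_linear f : Fam f -> bounded_fun_norm f /\ linear f.
  move=> [y y1 <-]; split=> [r|a h h']; last by rewrite /= ipDr ipZr mulrDl -mulrA.
  exists (r / `|Ts y|) => h hr; rewrite normrM normfV normr_id ler_pM2r ?invr_gt0 ?Tsy_gt0 //.
  by rewrite (le_trans (cauchy_schwarz _ _ _)) // y1 mul1r.
have Fam_pointwise : pointwise_bounded Fam.
  move=> h; have [x <-] := T_onto h; exists `|x| => _ [y y1 <-].
  rewrite normrM normfV normr_id ip_sym TsP ler_pdivrMr ?Tsy_gt0 //.
  by rewrite mulrC cauchy_schwarz.
have [K FamK] := Banach_Steinhauss Fam_bounded_linear Fam_pointwise 1.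
exists `|K| => // y; have [->|y0] := eqVneq y 0; first by rewrite normr0 mulr_ge0.
have ny : 0 < `|y| by rewrite normr_gt0.
pose u := `|y|^-1 *: y; have u1 : `|u| = 1 by rewrite normrZ normfV normr_id mulVf ?gt_eqF.
have := FamK _ (ex_intro2 _ _ u u1 erefl) u; rewrite u1 lexx => /(_ isT).
rewrite (ip_norm iV) u1 expr1n mul1r normfV normr_id /u linZ // normrZ normfV normr_id.
rewrite invfM invrK ler_pdivrMr ?normr_gt0 //; last by apply: contra_neq y0 => /Ts0.
by move=> /le_trans; apply; rewrite ler_wpM2r // ler_norm.
Qed.

Theorem onto_has_bounded_section (T : U -> V) :
  bounded_linear T -> (forall y, exists x, T x = y) -> has_bounded_section setT T.
Proof.
move=> bT T_onto; have [lT _] := bT; have [Ts bTs TsP] := adjoint_exists bT.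
have [lTs _] := bTs; have [K K0 TsK] := adjoint_bounded_below lTs TsP T_onto.
have cRg : closed_subspace (range Ts).
  split; last exact: closed_range_bounded_below bTs K0 TsK.
  split=> [|a _ _ [y _ <-] [y' _ <-]]; first by exists 0; rewrite ?lin0.
  by exists (a *: y + y'); rewrite ?lTs.
(* Split a preimage x0 of y as Ts z + w with w orthogonal to the range of Ts,
   hence T w = 0. *)
exists K => y; have [x0 <-] := T_onto y.
have [_ [z _ <-] x0z] := orth_decomposition iU cRg x0.
have TTsz : T (Ts z) = T x0.
  apply/eqP; rewrite eq_sym -subr_eq0 -linB //; apply/eqP/(ip_eq0 (iV := iV)).
  by rewrite TsP ip_sym; apply: x0z; exists (T (x0 - Ts z)).
exists (Ts z); split=> //; apply: sqr_le_mul; rewrite ?mulr_ge0 //.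
rewrite -(ip_norm iU) -TsP TTsz (le_trans (ler_norm _)) // (le_trans (cauchy_schwarz _ _ _)) //.
by rewrite [leRHS]mulrAC [leRHS]mulrC ler_wpM2l.
Qed.

End Adjoint.

Section Setting.
Variables (R : realType) (E F H0 H1 : completeNormedModType R).
Variables (iF : inner_product F) (iH0 : inner_product H0) (iH1 : inner_product H1).
Variables (L : E -> F) (r0 : E -> H0) (r1 : E -> H1).
Variables (g0 : H0 * F -> E) (g1 : H1 * F -> E).
Hypotheses (hr0 : bounded_linear r0) (hr1 : bounded_linear r1).
Hypotheses (hg0 : bounded_linear g0) (hg1 : bounded_linear g1).
Hypotheses (g0K : cancel (fun e => (r0 e, L e)) g0) (r0LK : cancel g0 (fun e => (r0 e, L e))).
Hypotheses (g1K : cancel (fun e => (r1 e, L e)) g1) (r1LK : cancel g1 (fun e => (r1 e, L e))).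
Hypothesis onto01 : forall h0 h1, exists e, r0 e = h0 /\ r1 e = h1.

Local Notation Q := (Qmap L r0 r1).
Let Qinv h := r0 (g1 (h, 0)).
Let M f := r1 (g0 (0, f)).

Lemma r0_g0 p : r0 (g0 p) = p.1. Proof. by rewrite -[in RHS](r0LK p). Qed.
Lemma L_g0 p : L (g0 p) = p.2. Proof. by rewrite -[in RHS](r0LK p). Qed.
Lemma r1_g1 p : r1 (g1 p) = p.1. Proof. by rewrite -[in RHS](r1LK p). Qed.
Lemma L_g1 p : L (g1 p) = p.2. Proof. by rewrite -[in RHS](r1LK p). Qed.

Lemma QmapE h : Q h = r1 (g0 (h, 0)).
Proof.
rewrite /Qmap; set e := xget _ _.
have [Le r0e] : [set e | L e = 0 /\ r0 e = h] e.
  by apply: xgetPex; exists (g0 (h, 0)); rewrite /= r0_g0 L_g0.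
by rewrite -r0e -Le g0K.
Qed.

Lemma Qmap_r0 e : L e = 0 -> Q (r0 e) = r1 e.
Proof. by move=> Le; rewrite QmapE -Le g0K. Qed.

Lemma Qinv_r1 e : L e = 0 -> Qinv (r1 e) = r0 e.
Proof. by move=> Le; rewrite /Qinv -Le g1K. Qed.

Lemma QmapK : cancel Q Qinv.
Proof. by move=> h; rewrite QmapE Qinv_r1 ?r0_g0 ?L_g0. Qed.

Lemma QinvK : cancel Qinv Q.
Proof. by move=> h; rewrite Qmap_r0 ?r1_g1 ?L_g1. Qed.

Lemma bounded_linear_Qmap : bounded_linear Q.
Proof.
rewrite (_ : Q = r1 \o g0 \o (fun h => (h, 0))); last by apply/funext => h; exact: QmapE.
by apply: bounded_linear_comp hr1; apply: bounded_linear_comp hg0; exact: bounded_linear_inl.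
Qed.

Lemma bounded_linear_Qinv : bounded_linear Qinv.
Proof.
by apply: (bounded_linear_comp _ hr0); apply: bounded_linear_comp hg1; exact: bounded_linear_inl.
Qed.

Lemma bounded_linear_M : bounded_linear M.
Proof.
by apply: (bounded_linear_comp _ hr1); apply: bounded_linear_comp hg0; exact: bounded_linear_inr.
Qed.

Lemma r1_decomposition e : r1 e = Q (r0 e) + M (L e).
Proof.
have [[lr1 _] [lg0 _]] := (hr1, hg0).
rewrite QmapE /M -linD // -linD //.
have -> : ((r0 e, 0) + (0, L e) : H0 * F) = (r0 e, L e).
  by congr (_, _) => /=; rewrite ?addr0 ?add0r.
by rewrite g0K.
Qed.

Lemma M_onto h : exists f, M f = h.
Proof.
have [e [r0e r1e]] := onto01 0 h; exists (L e).
have [lQ _] := bounded_linear_Qmap.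
by apply/eqP; rewrite -(subr_eq0) -r1e (r1_decomposition e) r0e lin0 // add0r subrr.
Qed.

Lemma M_section : has_bounded_section setT M.
Proof. by have := onto_has_bounded_section iF iH1 bounded_linear_M M_onto. Qed.

Variables (B0 : set H0) (B1 : set H1).
Hypotheses (cB0 : closed_subspace B0) (cB1 : closed_subspace B1).

Local Notation P0 e := (orth_proj iH0 (orth iH0 B0) (r0 e)).
Local Notation P1 e := (orth_proj iH1 (orth iH1 B1) (r1 e)).
Let D := [set e | P0 e = 0] `&` [set e | P1 e = 0].
Let S := sum_set (Q @` B0) B1.

Lemma restriction_domainE : D = [set e | B0 (r0 e)] `&` [set e | B1 (r1 e)].
Proof.
by congr (_ `&` _); apply/funext => e /=; apply/propext; exact: orth_proj_eq0.
Qed.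

Lemma dim_eq_kernel a : dim_eq (D `&` [set e | L e = 0]) a <-> dim_eq (Q @` B0 `&` B1) a.
Proof.
have [lr1 _] := hr1; have [lg _] := bounded_linear_comp (bounded_linear_inl _ F) hg1.
rewrite restriction_domainE; apply: (dim_eq_bij _ lr1 lg) => /=.
- by move=> e [[B0e B1e] Le]; split=> //; exists (r0 e) => //; exact: Qmap_r0.
- move=> _ [[b B0b <-] B1Qb]; rewrite /= r1_g1 L_g1; split=> //.
  by split=> //=; have := QmapK b; rewrite /Qinv => ->.
- by move=> e [_ Le]; rewrite -Le g1K.
- by move=> h _; rewrite r1_g1.
Qed.

Lemma image_restriction : L @` D = setT `&` M @^-1` S.
Proof.
have [lQ _] := bounded_linear_Qmap; have [sB0 _] := cB0.
rewrite restriction_domainE; apply/seteqP; split=> f.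
  move=> [e [B0e B1e] <-]; split=> //; exists (Q (- r0 e)), (r1 e).
  split=> //; first by exists (- r0 e) => //; exact: subspaceN.
  by rewrite linN // (r1_decomposition e) addKr.
move=> [_ [_ [v [[b B0b <-] B1v Mf]]]]; exists (g0 (- b, f)); last by rewrite L_g0.
split; rewrite /= ?r0_g0 /=; first exact: subspaceN.
by rewrite r1_decomposition r0_g0 L_g0 /= Mf linN // addKr.
Qed.

Lemma fredholm_op_restriction k :
  fredholm_op D setT L k <-> fredholm_pair (Q @` B0) B1 k.
Proof.
have [lM _] := bounded_linear_M.
have M_onto' y : exists x, setT x /\ M x = y by have [x ?] := M_onto y; exists x.
have data : (exists a b : nat, [/\ dim_eq (D `&` [set e | L e = 0]) a, closed (L @` D),
    codim_eq setT (L @` D) b & k = a%:Z - b%:Z]) <-> fredholm_pair (Q @` B0) B1 k.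
  rewrite image_restriction; apply: fredholm_index_congr.
  - exact: dim_eq_kernel.
  - exact: closed_preimage_onto (subspaceT _) closedT bounded_linear_M M_section.
  - by move=> b; exact: codim_eq_preimage lM (subspaceT _) M_onto'.
by split=> [[_ /data] | /data].
Qed.

Let W := [set y : H0 * H1 * F | orth iH0 B0 y.1.1 /\ orth iH1 B1 y.1.2].
Let T e := (P0 e, P1 e, L e).
Let Phi (y : H0 * H1 * F) := M y.2 + Q y.1.1 - y.1.2.

Lemma subspace_W : Defs.subspace W.
Proof.
have [sO0 sO1] := (orth_subspace iH0 B0, orth_subspace iH1 B1).
split=> [|a x y [x0 x1] [y0 y1]]; first by split; exact: subspace0.
by split; [case: sO0 => _; apply | case: sO1 => _; apply].
Qed.

Lemma closed_W : closed W.
Proof.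
have bfst2 : bounded_linear (fun y : H0 * H1 * F => y.1) by exact: bounded_linear_fst.
have b11 := bounded_linear_comp bfst2 (bounded_linear_fst H0 H1).
have b12 := bounded_linear_comp bfst2 (bounded_linear_snd H0 H1).
exact: closedI (bounded_linear_closed_preimage b11 (closed_orth (iV := iH0) (B := B0)))
  (bounded_linear_closed_preimage b12 (closed_orth (iV := iH1) (B := B1))).
Qed.

Lemma bounded_linear_Phi : bounded_linear Phi.
Proof.
have bfst2 : bounded_linear (fun y : H0 * H1 * F => y.1) by exact: bounded_linear_fst.
apply: bounded_linearB; last exact: bounded_linear_comp bfst2 (bounded_linear_snd _ _).
apply: bounded_linearD; first exact: bounded_linear_comp (bounded_linear_snd _ _) bounded_linear_M.
apply: bounded_linear_comp bounded_linear_Qmap.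
exact: bounded_linear_comp bfst2 (bounded_linear_fst _ _).
Qed.

Lemma Phi_section : has_bounded_section W Phi.
Proof.
have [lQ _] := bounded_linear_Qmap; have [C M_sec] := M_section.
exists C => h; have [f [_ Mf fC]] := M_sec h; exists (0, f); split.
- by split; apply: subspace0; exact: orth_subspace.
- by rewrite /Phi /= lin0 // addr0 subr0.
- by rewrite normr_inr.
Qed.

Lemma kernel_T : setT `&` [set e | T e = 0] = D `&` [set e | L e = 0].
Proof.
apply/seteqP; split=> e; first by move=> [_ [= P0e P1e Le]].
by move=> [[/= P0e P1e] /= Le]; split=> //; rewrite /= /T P0e P1e Le.
Qed.

Lemma image_T : T @` setT = W `&` Phi @^-1` S.
Proof.
have [lQ _] := bounded_linear_Qmap; have [sB0 _] := cB0.
apply/seteqP; split=> [_ [e _ <-]|[[y0 y1] f]]; last first.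
  move=> [[/= y0B y1B] [_ [v [[b B0b <-] B1v Phiy]]]].
  exists (g0 (y0 - b, f)) => //; rewrite /T L_g0; congr (_, _, _).
    by apply: orth_projE => //; rewrite r0_g0 /= addrAC subrr add0r; exact: subspaceN.
  apply: orth_projE => //; rewrite r1_decomposition r0_g0 L_g0 /= (linB lQ).
  suff -> : Q y0 - Q b + M f - y1 = v by [].
  rewrite -[v](addKr (Q b)) -Phiy /Phi /= [RHS]addrA; congr (_ - _).
  by rewrite addrAC [RHS]addrC (addrC (Q y0)).
split; first by split; exact: orth_proj_orth.
exists (Q (P0 e - r0 e)), (r1 e - P1 e); split.
- by exists (P0 e - r0 e) => //; rewrite -opprB; apply: (subspaceN sB0); exact: orth_proj_sub.
- exact: orth_proj_sub.
- rewrite /Phi /=; move: (P1 e) => p1.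
  rewrite (linB lQ) (r1_decomposition e) -[Q (r0 e) + _ - _]addrA subrKA.
  by rewrite addrA (addrC (Q (P0 e))).
Qed.

Lemma fredholm_op_T k : fredholm_op setT W T k <-> fredholm_pair (Q @` B0) B1 k.
Proof.
have [lPhi _] := bounded_linear_Phi; have [C Phi_sec] := Phi_section.
have Phi_onto y : exists x, W x /\ Phi x = y by have [x []] := Phi_sec y; exists x.
have T_W e : setT e -> W (T e) by split; exact: orth_proj_orth.
have data : (exists a b : nat, [/\ dim_eq (setT `&` [set e | T e = 0]) a, closed (T @` setT),
    codim_eq W (T @` setT) b & k = a%:Z - b%:Z]) <-> fredholm_pair (Q @` B0) B1 k.
  rewrite kernel_T image_T; apply: fredholm_index_congr.
  - exact: dim_eq_kernel.
  - exact: closed_preimage_onto subspace_W closed_W bounded_linear_Phi Phi_section.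
  - by move=> b; exact: codim_eq_preimage lPhi subspace_W Phi_onto.
by split=> [[_ /data] | /data].
Qed.

End Setting.

Unset Implicit Arguments.
Set Strict Implicit.

Theorem proposition3p4 (R : realType)
  (E F H0 H1 : completeNormedModType R)
  (iE : inner_product E) (iF : inner_product F)
  (iH0 : inner_product H0) (iH1 : inner_product H1)
  (L : E -> F) (r0 : E -> H0) (r1 : E -> H1)
  (hL : bounded_linear L) (hr0 : bounded_linear r0) (hr1 : bounded_linear r1)
  (iso0 : isomorphism (fun e => (r0 e, L e)))
  (iso1 : isomorphism (fun e => (r1 e, L e)))
  (onto01 : forall (h0 : H0) (h1 : H1), exists e, r0 e = h0 /\ r1 e = h1)
  (B0 : set H0) (B1 : set H1)
  (cB0 : closed_subspace B0) (cB1 : closed_subspace B1)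
  (k : int) :
  let Q := Qmap L r0 r1 in
  let P0 := fun e => orth_proj iH0 (orth iH0 B0) (r0 e) in
  let P1 := fun e => orth_proj iH1 (orth iH1 B1) (r1 e) in
  [<-> fredholm_pair B0 (Q @^-1` B1) k;
       fredholm_pair (Q @` B0) B1 k;
       fredholm_op setT
         [set y | orth iH0 B0 y.1.1 /\ orth iH1 B1 y.1.2]
         (fun e => (P0 e, P1 e, L e)) k;
       fredholm_op ([set e | P0 e = 0] `&` [set e | P1 e = 0]) setT L k].
Proof.
move=> Q P0 P1.
have [_ [g0 [hg0 g0K r0LK]]] := iso0; have [_ [g1 [hg1 g1K r1LK]]] := iso1.
have i_ii : fredholm_pair B0 (Q @^-1` B1) k <-> fredholm_pair (Q @` B0) B1 k.
  exact: fredholm_pair_iso (bounded_linear_Qmap hr1 hg0 g0K r0LK) (bounded_linear_Qinv hr0 hg1)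
    (QmapK g0K r0LK g1K) (QinvK g0K r0LK r1LK).
have iii_ii := fredholm_op_T iF iH0 iH1 hr1 hg0 hg1 g0K r0LK g1K r1LK onto01 cB0 cB1 k.
have iv_ii := fredholm_op_restriction iF iH0 iH1 hr1 hg0 hg1 g0K r0LK g1K r1LK onto01 cB0 cB1 k.
by tfae; [move/i_ii | move/iii_ii | move/iii_ii/iv_ii | move/iv_ii/i_ii].
Qed.
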